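(* For every $w\in S_n$, the quotient groups $\mathfrak{ut}_n/\mathfrak{ut}_{w^{-1}}$ and $\mathfrak{ut}_n/\mathfrak{ut}_w$ are isomorphic.
   Context: Let $q$ be a prime power and $\mathfrak{ut}_n$ the additive group of strictly upper triangular $n\times n$ matrices over $\mathbb{F}_q$. For $w\in S_n$ (one-line notation), $\iota_k(w)=\#\{i<w^{-1}(k):w(i)>k\}$ and $\mathfrak{ut}_w=\{x\in\mathfrak{ut}_n:x_{ij}\ne0\Rightarrow0<j-i\le\iota_i(w)\}$, a subgroup of $\mathfrak{ut}_n$. *)

From HB Require Import structures.
From mathcomp Require Import all_boot all_order all_algebra all_fingroup.
Set Implicit Arguments. Unset Strict Implicit. Unset Printing Implicit Defensive.
Import GRing.Theory.
Local Open Scope ring_scope.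

Definition mxgroup (F : finFieldType) (n : nat) : finGroupType :=
  FinRing.Zmodule_to_finGroup ('M[F]_n : finZmodType).

(* iota_k(w) = #{ i < w^-1(k) : w(i) > k }  (indices 0-based) *)
Definition iota_perm (n : nat) (w : 'S_n) (k : 'I_n) : nat :=
  #|[set i : 'I_n | (i < (w^-1)%g k)%N && (k < w i)%N]|.

Definition ut (F : finFieldType) (n : nat) : {set mxgroup F n} :=
  [set x : 'M[F]_n | [forall i : 'I_n, forall j : 'I_n,
      (x i j != 0) ==> (i < j)%N]].

Definition utw (F : finFieldType) (n : nat) (w : 'S_n) : {set mxgroup F n} :=
  [set x : 'M[F]_n | [forall i : 'I_n, forall j : 'I_n,
      (x i j != 0) ==> (0 < j - i <= iota_perm w i)%N]].

Lemma utw_group_set (F : finFieldType) (n : nat) (w : 'S_n) :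
  group_set (utw F w).
Proof.
apply/andP; split.
  by rewrite inE; apply/forallP => i; apply/forallP => j; rewrite mxE eqxx.
apply/subsetP => _ /imset2P [x y Hx Hy ->].
move: Hx Hy; rewrite !inE => /forallP Hx /forallP Hy.
apply/forallP => i; apply/forallP => j.
have /forallP /(_ j) := Hx i; have /forallP /(_ j) := Hy i.
have -> : (x * y)%g i j = x i j + y i j by rewrite /= mxE.
case: (x i j =P 0) => [->|/eqP nx] /=; first by rewrite add0r.
by move=> _ ->; rewrite implybT.
Qed.
Canonical utw_group F n w := Group (@utw_group_set F n w).

Lemma ut_group_set (F : finFieldType) (n : nat) : group_set (ut F n).
Proof.
apply/andP; split.
  by rewrite inE; apply/forallP => i; apply/forallP => j; rewrite mxE eqxx.
apply/subsetP => _ /imset2P [x y Hx Hy ->].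
move: Hx Hy; rewrite !inE => /forallP Hx /forallP Hy.
apply/forallP => i; apply/forallP => j.
have /forallP /(_ j) := Hx i; have /forallP /(_ j) := Hy i.
have -> : (x * y)%g i j = x i j + y i j by rewrite /= mxE.
case: (x i j =P 0) => [->|/eqP nx] /=; first by rewrite add0r.
by move=> _ ->; rewrite implybT.
Qed.
Canonical ut_group F n := Group (@ut_group_set F n).

From mathcomp Require Import all_boot all_order all_algebra all_fingroup.
From mathcomp Require Import abelian finfield zify.

Set Implicit Arguments.
Unset Strict Implicit.
Unset Printing Implicit Defensive.
Import GRing.Theory.
Local Open Scope ring_scope.

(* Both quotients are quotients of the elementary abelian p-group ut_n (p the
   characteristic of F), hence elementary abelian, so it suffices that they have
   the same order.  As ut_w consists of the matrices supported on a fixed set of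
   sum_k iota_k(w) positions, |ut_w| = q^(sum_k iota_k(w)), and sum_k iota_k(w)
   is the number of inversions of w, which is also that of w^-1. *)

Lemma card_ord_range n a b :
  (b <= n)%N -> #|[set j : 'I_n | (a <= j < b)%N]| = (b - a)%N.
Proof.
move=> le_bn; rewrite -sum1dep_card.
transitivity (\sum_(0 <= j < n | (a <= j < b)%N) 1)%N; first by rewrite big_mkord.
rewrite -(big_nat_widen 0 _ _ (fun j => a <= j)%N) //.
by rewrite -(big_nat_widenl a 0 b xpredT (fun _ => 1%N)) // sum_nat_const_nat muln1.
Qed.

Lemma card_ord_pairs n (Q : 'I_n -> 'I_n -> bool) :
  #|[set p : 'I_n * 'I_n | Q p.1 p.2]| = (\sum_i #|[set j | Q i j]|)%N.
Proof.
rewrite -sum1dep_card -(pair_big_dep xpredT Q (fun _ _ => 1%N)).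
by apply: eq_bigr => i _; rewrite sum1dep_card.
Qed.

Lemma iota_perm_le n (w : 'S_n) k : (iota_perm w k <= n - k.+1)%N.
Proof.
have <- : #|w @^-1: [set j : 'I_n | (k.+1 <= j < n)%N]| = (n - k.+1)%N.
  by rewrite card_preimset ?card_ord_range //; apply: perm_inj.
apply: subset_leq_card; apply/subsetP => i; rewrite !inE => /andP[_ lt_k_wi].
by rewrite lt_k_wi ltn_ord.
Qed.

(* Both sums count the pairs (k, i) with i < w^-1 k and k < w i, up to a swap. *)
Lemma sum_iota_permV n (w : 'S_n) :
  (\sum_k iota_perm (w^-1)%g k)%N = (\sum_k iota_perm w k)%N.
Proof.
pose B (u : 'S_n) :=
  [set p : 'I_n * 'I_n | (p.2 < (u^-1)%g p.1)%N && (p.1 < u p.2)%N].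
have sum_iotaE u : (\sum_k iota_perm u k)%N = #|B u|.
  by rewrite (@card_ord_pairs _ (fun k i => (i < (u^-1)%g k)%N && (k < u i)%N)).
have swap_inj : injective (fun p : 'I_n * 'I_n => (p.2, p.1)).
  by move=> [a b] [c d] [-> ->].
rewrite !sum_iotaE -(card_preimset _ swap_inj).
by apply: eq_card => -[k i]; rewrite !inE /= invgK andbC.
Qed.

Lemma card_utw_support n (w : 'S_n) :
  #|[set p : 'I_n * 'I_n | (0 < p.2 - p.1 <= iota_perm w p.1)%N]|
  = (\sum_k iota_perm w k)%N.
Proof.
rewrite (@card_ord_pairs _ (fun i j => (0 < j - i <= iota_perm w i)%N)).
apply: eq_bigr => i _.
have := iota_perm_le w i; have := ltn_ord i => lt_in le_iota.
rewrite -[RHS](_ : (i + iota_perm w i).+1 - i.+1 = iota_perm w i)%N; last by lia.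
rewrite -(@card_ord_range n); last by lia.
by apply: eq_card => j; rewrite !inE; apply/idP/idP => /andP[? ?]; apply/andP; lia.
Qed.

Section MatrixGroup.

Variable F : finFieldType.

Lemma card_mx_support n (P : {set 'I_n * 'I_n}) :
  #|[set x : 'M[F]_n | [forall i, forall j, (x i j != 0) ==> ((i, j) \in P)]]|
  = (#|F| ^ #|P|)%N.
Proof.
have Matrix_inj : injective (@Matrix F n n) by move=> f g /(congr1 (@mx_val _ _ _)).
have -> : #|F| = #|@predT F| by apply: eq_card.
rewrite -(card_pffun_on 0 P predT) -(card_imset _ Matrix_inj).
apply: eq_card => -[f]; rewrite inE mem_imset //.
apply/forallP/pfamilyP => [supp_f | [/supportP supp_f _] i].
  split=> //; apply/supportP => -[i j] /=; have /forallP/(_ j) := supp_f i.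
  by rewrite [Matrix _ _ _]/fun_of_matrix /= => /implyP; apply: contraNeq.
apply/forallP => j; rewrite [Matrix _ _ _]/fun_of_matrix /=; apply/implyP.
by apply: contraNT => /supp_f ->; rewrite eqxx.
Qed.

Lemma card_utw n (w : 'S_n) : #|utw F w| = (#|F| ^ (\sum_k iota_perm w k))%N.
Proof.
rewrite -card_utw_support -card_mx_support; apply: eq_card => x.
by rewrite !inE; apply: eq_forallb => i; apply: eq_forallb => j; rewrite inE.
Qed.

Lemma utw_subset_ut n (w : 'S_n) : utw F w \subset ut F n.
Proof.
apply/subsetP => x; rewrite !inE => /forallP supp_x.
apply/forallP => i; apply/forallP => j; apply/implyP => nz_xij.
by have /forallP/(_ j)/implyP/(_ nz_xij)/andP[+ _] := supp_x i; rewrite subn_gt0.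
Qed.

Lemma mxgroup_cents n (A B : {set mxgroup F n}) : A \subset 'C(B)%g.
Proof. by apply/centsP => x _ y _; apply: addrC. Qed.

Lemma mxgroup_abelem n p (G : {group mxgroup F n}) :
  p \in [pchar F] -> (p.-abelem G)%g.
Proof.
move=> charFp; apply/(abelemP (pcharf_prime charFp)); split.
  exact: mxgroup_cents.
move=> x _; rewrite FinRing.zmodXgE; apply/matrixP => i j.
by rewrite mulmxnE mxE mulrn_pchar.
Qed.

Lemma card_quotient_mxgroup n (G H : {group mxgroup F n}) :
  H \subset G -> #|(G / H)%g| = (#|G| %/ #|H|)%N.
Proof.
move=> sHG; rewrite card_quotient; last exact: cents_norm (mxgroup_cents _ _).
by rewrite -divgI (setIidPr sHG).
Qed.

End MatrixGroup.

Theorem proposition3p4 (F : finFieldType) (n : nat) (w : 'S_n) :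
  ((ut F n / utw F (w^-1)%g) \isog (ut F n / utw F w))%g.
Proof.
have [p _ charFp] := finPcharP F.
have ut_abelem := mxgroup_abelem (ut_group F n) charFp.
rewrite (isog_abelem_card _ (quotient_abelem _ ut_abelem)) quotient_abelem //=.
by rewrite !card_quotient_mxgroup ?utw_subset_ut // !card_utw sum_iota_permV.
Qed.
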